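(* In the general model with $N\ge 2$, let $b$ be differentiable and strictly concave and $c$ differentiable and strictly convex. Let $A^o$ denote aggregate abatement in the global social welfare optimum, characterized by $P\,b'(A^o)=c'(A^o/P)$ (all countries abate $a^o=A^o/P$ per capita), and let $\tau^o=P\,b'(A^o)$ be the uniform optimal carbon price. Consider the mixed-motives outcome $(a_1,\dots,a_N)$ in which country 1 maximizes global social welfare $W$ over $a_1$ and each country $j=2,\dots,N$ maximizes its own $u_j$ over $a_j$, all choices interior, i.e. $$P\,b'(A)=c'(a_1),\qquad P_j\,b'(A)=c'(a_j)\ (j=2,\dots,N),\qquad A=\sum_{j}P_ja_j.$$ Then country 1's carbon price $\tau_1=c'(a_1)=P\,b'(A)$ is strictly higher than the carbon price in the global social welfare optimum: $\tau_1>\tau^o$.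
   Context: General model: there are $N$ countries with populations $P_1,\dots,P_N>0$; $P=\sum_{j=1}^N P_j$. Country $i$ chooses per-capita abatement $a_i\in\mathbb{R}$; its total abatement is $A_i=P_ia_i$, aggregate abatement is $A=\sum_{j=1}^N P_ja_j$. The utility of a representative person in country $i$ is $u_i(a_1,\dots,a_N)=b(A)-c(a_i)$, where $b$ is the benefit function and $c$ the abatement cost function (identical across countries). Individuals do not internalize the externality, so to implement per-capita abatement $a_i$ the country must set a carbon price $\tau_i=c'(a_i)$. Global social welfare is $W(a_1,\dots,a_N)=\sum_{j=1}^N P_j u_j(a_1,\dots,a_N)$. *)

From Stdlib Require Import Reals.
Open Scope R_scope.

(* sum_{i=1}^{N} f i  (countries are indexed 1..N) *)
Definition sum1N (N : nat) (f : nat -> R) : R :=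
  match N with
  | O => 0
  | S _ => sum_f 1 N f
  end.

Definition strictly_concave (f : R -> R) : Prop :=
  forall x y t, x <> y -> 0 < t < 1 ->
    t * f x + (1 - t) * f y < f (t * x + (1 - t) * y).

Definition strictly_convex (f : R -> R) : Prop :=
  forall x y t, x <> y -> 0 < t < 1 ->
    f (t * x + (1 - t) * y) < t * f x + (1 - t) * f y.

(* Concavity of b and convexity of c make b' strictly decreasing and c'
   strictly increasing. If country 1's price P b'(A) did not exceed
   tau^o = P b'(A^o), i.e. b'(A) <= b'(A^o), then c'(a_1) <= c'(a^o) and, as
   P_j < P, c'(a_j) = P_j b'(A) < P b'(A) <= c'(a^o) for j >= 2; so every
   country abates at most a^o, and countries 2..N strictly less, whence
   A < P a^o = A^o and b'(A) > b'(A^o), a contradiction. *)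
From Stdlib Require Import Reals Lra Lia.
Open Scope R_scope.

(* If the tangent at x passed above f y, the chord inequality would keep the
   difference quotients of f at x towards y a fixed amount below f' x. *)
Lemma strictly_convex_tangent_le f f'
  (Hf' : forall x, derivable_pt_lim f x (f' x)) (Hf : strictly_convex f) x y :
  f x + f' x * (y - x) <= f y.
Proof.
  destruct (Req_dec y x) as [-> | Hyx]; [lra |].
  apply Rnot_lt_le; intro Hlt.
  set (eps := f x + f' x * (y - x) - f y).
  assert (Hd : 0 < Rabs (y - x)) by (apply Rabs_pos_lt; lra).
  destruct (Hf' x (eps / Rabs (y - x))) as [d Hdiff].
  { apply Rdiv_lt_0_compat; unfold eps; lra. }
  pose proof (cond_pos d) as Hd0.
  set (t := Rmin (1 / 2) (d / (2 * Rabs (y - x)))).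
  assert (Ht0 : 0 < t) by (apply Rmin_glb_lt; [lra | apply Rdiv_lt_0_compat; lra]).
  assert (Ht1 : t <= 1 / 2) by apply Rmin_l.
  assert (Htd : t * Rabs (y - x) <= d / 2).
  { apply (Rmult_le_reg_r (/ Rabs (y - x))); [apply Rinv_0_lt_compat; lra |].
    replace (t * Rabs (y - x) * / Rabs (y - x)) with t by (field; lra).
    replace (d / 2 * / Rabs (y - x)) with (d / (2 * Rabs (y - x))) by (field; lra).
    apply Rmin_r. }
  set (h := t * (y - x)).
  assert (Hh : Rabs h = t * Rabs (y - x))
    by (unfold h; rewrite Rabs_mult, (Rabs_pos_eq t); lra).
  assert (Hh0 : h <> 0) by (unfold h; apply Rmult_integral_contrapositive; lra).
  specialize (Hdiff h Hh0 ltac:(lra)).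
  assert (Hlin : Rabs (f (x + h) - f x - f' x * h) < t * eps).
  { replace (f (x + h) - f x - f' x * h)
      with (((f (x + h) - f x) / h - f' x) * h) by (field; exact Hh0).
    rewrite Rabs_mult, Hh.
    replace (t * eps) with (eps / Rabs (y - x) * (t * Rabs (y - x))) by (field; lra).
    apply Rmult_lt_compat_r; [nra | exact Hdiff]. }
  apply Rabs_def2 in Hlin.
  pose proof (Hf y x t Hyx ltac:(lra)) as Hchord.
  replace (t * y + (1 - t) * x) with (x + h) in Hchord by (unfold h; ring).
  unfold eps, h in *. nra.
Qed.

Lemma strictly_convex_tangent_lt f f'
  (Hf' : forall x, derivable_pt_lim f x (f' x)) (Hf : strictly_convex f) x y :
  x <> y -> f x + f' x * (y - x) < f y.
Proof.
  intro Hxy.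
  set (m := (x + y) / 2).
  pose proof (strictly_convex_tangent_le f f' Hf' Hf x m) as Htangent.
  pose proof (Hf x y (1 / 2) Hxy ltac:(lra)) as Hmid.
  replace (1 / 2 * x + (1 - 1 / 2) * y) with m in Hmid by (unfold m; field).
  replace (m - x) with ((y - x) / 2) in Htangent by (unfold m; field).
  lra.
Qed.

Lemma strictly_convex_derive_increasing f f'
  (Hf' : forall x, derivable_pt_lim f x (f' x)) (Hf : strictly_convex f) :
  strict_increasing f'.
Proof.
  intros x y Hxy.
  pose proof (strictly_convex_tangent_lt f f' Hf' Hf x y ltac:(lra)).
  pose proof (strictly_convex_tangent_lt f f' Hf' Hf y x ltac:(lra)).
  nra.
Qed.

Lemma strictly_concave_derive_decreasing f f'
  (Hf' : forall x, derivable_pt_lim f x (f' x)) (Hf : strictly_concave f) :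
  strict_decreasing f'.
Proof.
  intros x y Hxy.
  assert (Hopp : strictly_convex (fun x => - f x)).
  { intros u v t Huv Ht. specialize (Hf u v t Huv Ht). lra. }
  assert (Hopp' : forall x, derivable_pt_lim (fun x => - f x) x (- f' x))
    by (intro z; apply (derivable_pt_lim_opp f z (f' z)), Hf').
  pose proof (strictly_convex_derive_increasing _ _ Hopp' Hopp x y Hxy).
  lra.
Qed.

Lemma strict_increasing_lt_inv f (Hf : strict_increasing f) x y :
  f x < f y -> x < y.
Proof.
  intro Hlt. apply Rnot_le_lt; intros [Hyx | ->]; [apply Hf in Hyx |]; lra.
Qed.

Lemma strict_increasing_le_inv f (Hf : strict_increasing f) x y :
  f x <= f y -> x <= y.
Proof. intro Hle. apply Rnot_lt_le; intro Hyx. apply Hf in Hyx. lra. Qed.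

Lemma sum1N_S n f : sum1N (S n) f = sum1N n f + f (S n).
Proof.
  destruct n as [| n]; unfold sum1N, sum_f; simpl; [ring |].
  rewrite Nat.sub_0_r, Nat.add_1_r. reflexivity.
Qed.

Lemma sum1N_mulr n f k : sum1N n (fun i => f i * k) = sum1N n f * k.
Proof.
  induction n as [| n IH]; [simpl; ring |].
  rewrite !sum1N_S, IH. ring.
Qed.

Lemma sum1N_le n f g :
  (forall i, (1 <= i <= n)%nat -> f i <= g i) -> sum1N n f <= sum1N n g.
Proof.
  induction n as [| n IH]; intro Hfg; [simpl; lra |].
  rewrite !sum1N_S.
  apply Rplus_le_compat; [apply IH; intros |]; apply Hfg; lia.
Qed.

Lemma sum1N_lt n f g :
  (forall i, (1 <= i <= n)%nat -> f i <= g i) ->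
  (exists i, (1 <= i <= n)%nat /\ f i < g i) -> sum1N n f < sum1N n g.
Proof.
  induction n as [| n IH]; intros Hfg [i [Hi Hlt]]; [lia |].
  rewrite !sum1N_S.
  destruct (Nat.eq_dec i (S n)) as [-> | Hne].
  - apply Rplus_le_lt_compat; [apply sum1N_le; intros; apply Hfg; lia | exact Hlt].
  - apply Rplus_lt_le_compat; [| apply Hfg; lia].
    apply IH; [intros; apply Hfg; lia | exists i; split; [lia | exact Hlt]].
Qed.

Lemma sum1N_gt0 n f :
  (1 <= n)%nat -> (forall i, (1 <= i <= n)%nat -> 0 < f i) -> 0 < sum1N n f.
Proof.
  intros Hn Hf.
  replace 0 with (sum1N n (fun i => f i * 0)) by (rewrite sum1N_mulr; ring).
  apply sum1N_lt.
  - intros i Hi. specialize (Hf i Hi). lra.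
  - exists 1%nat. split; [lia |]. specialize (Hf 1%nat ltac:(lia)). lra.
Qed.

Lemma sum1N_gt_term n f j :
  (2 <= n)%nat -> (forall i, (1 <= i <= n)%nat -> 0 < f i) ->
  (1 <= j <= n)%nat -> f j < sum1N n f.
Proof.
  revert j.
  induction n as [| n IH]; intros j Hn Hf Hj; [lia |].
  rewrite sum1N_S.
  destruct (Nat.eq_dec j (S n)) as [-> | Hne].
  - pose proof (sum1N_gt0 n f ltac:(lia) ltac:(intros; apply Hf; lia)). lra.
  - assert (Hle : f j <= sum1N n f).
    { destruct (Nat.eq_dec n 1) as [-> | Hn1].
      - replace j with 1%nat by lia. rewrite sum1N_S. simpl. lra.
      - left. apply IH; [lia | intros; apply Hf; lia | lia]. }
    pose proof (Hf (S n) ltac:(lia)). lra.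
Qed.

Lemma mixed_motives_price_gt_optimal
  (N : nat) (HN : (2 <= N)%nat)
  (Pop : nat -> R) (HPpos : forall i, (1 <= i <= N)%nat -> 0 < Pop i)
  (b' c' : R -> R) (Hb'pos : forall x, 0 < b' x)
  (Hb'decr : strict_decreasing b') (Hc'incr : strict_increasing c')
  (Ao : R) (HAo : sum1N N Pop * b' Ao = c' (Ao / sum1N N Pop))
  (a : nat -> R) (A : R) (HA : A = sum1N N (fun j => Pop j * a j))
  (H1 : sum1N N Pop * b' A = c' (a 1%nat))
  (Hj : forall j, (2 <= j <= N)%nat -> Pop j * b' A = c' (a j)) :
  sum1N N Pop * b' Ao < c' (a 1%nat).
Proof.
  set (P := sum1N N Pop) in *.
  set (ao := Ao / P) in *.
  assert (HP : 0 < P) by (apply sum1N_gt0; [lia | exact HPpos]).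
  rewrite <- H1. apply Rmult_lt_compat_l; [exact HP |].
  apply Rnot_le_lt; intro Hb'A.
  assert (Hprice : P * b' A <= c' ao) by (rewrite <- HAo; nra).
  assert (Ha1 : a 1%nat <= ao) by (apply (strict_increasing_le_inv c'); [exact Hc'incr | lra]).
  assert (Haj : forall j, (2 <= j <= N)%nat -> a j < ao).
  { intros j Hj2. apply (strict_increasing_lt_inv c'); [exact Hc'incr |].
    rewrite <- Hj by exact Hj2.
    assert (HPj : Pop j < P) by (apply sum1N_gt_term; [exact HN | exact HPpos | lia]).
    pose proof (Hb'pos A). nra. }
  assert (HAlt : A < Ao).
  { replace Ao with (sum1N N (fun j => Pop j * ao))
      by (rewrite (sum1N_mulr N Pop ao); fold P; unfold ao; field; lra).
    rewrite HA. apply sum1N_lt.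
    - intros i Hi. apply Rmult_le_compat_l; [left; apply HPpos; exact Hi |].
      destruct (Nat.eq_dec i 1) as [-> | Hi1]; [exact Ha1 |].
      left; apply Haj; lia.
    - exists N. split; [lia |].
      apply Rmult_lt_compat_l; [apply HPpos; lia | apply Haj; lia]. }
  apply Hb'decr in HAlt. lra.
Qed.

Theorem proposition3
  (N : nat) (HN : (2 <= N)%nat)
  (Pop : nat -> R) (HPpos : forall i, (1 <= i <= N)%nat -> 0 < Pop i)
  (b b' c c' : R -> R)
  (Hb' : forall x, derivable_pt_lim b x (b' x))
  (Hc' : forall x, derivable_pt_lim c x (c' x))
  (Hbconc : strictly_concave b)
  (Hcconv : strictly_convex c)
  (Hbinc : forall x, 0 < b' x)
  (Ao : R)
  (HAo : sum1N N Pop * b' Ao = c' (Ao / sum1N N Pop))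
  (a : nat -> R) (A : R)
  (HA : A = sum1N N (fun j => Pop j * a j))
  (H1 : sum1N N Pop * b' A = c' (a 1%nat))
  (Hj : forall j, (2 <= j <= N)%nat -> Pop j * b' A = c' (a j)) :
  c' (a 1%nat) > sum1N N Pop * b' Ao.
Proof.
  apply (mixed_motives_price_gt_optimal N HN Pop HPpos b' c' Hbinc
           (strictly_concave_derive_decreasing b b' Hb' Hbconc)
           (strictly_convex_derive_increasing c c' Hc' Hcconv)
           Ao HAo a A HA H1 Hj).
Qed.
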